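(* Let $(X,d)$ be a compact metric space and $\mathcal A\subset\mathcal K(X)$ a nonempty set with the finite union property. Then $$\underline{\mathrm{mo}}(\mathcal A,H)\ge\liminf_{\varepsilon\to0}\frac{\log B(\mathcal A,\varepsilon)}{-\log\varepsilon}.$$
   Context: $\mathcal K(X)$ is the space of nonempty closed subsets of $X$ with Hausdorff metric $H$. $\mathcal A$ has the finite union property if $B\cup C\in\mathcal A$ whenever $B,C\in\mathcal A$. $B,C\in\mathcal K(X)$ are $\varepsilon$-split if $\min\{d(x,y):x\in B,y\in C\}>\varepsilon$; $B(\mathcal A,\varepsilon)$ is the maximal number of pairwise $\varepsilon$-split elements of $\mathcal A$. $N(\mathcal A,\varepsilon)$ is the smallest cardinality of $E\subset\mathcal K(X)$ with $\mathcal A$ covered by the $H$-balls of radius $\varepsilon$ centered in $E$, and $\underline{\mathrm{mo}}(\mathcal A,H)=\liminf_{\varepsilon\to0}\frac{\log\log N(\mathcal A,\varepsilon)}{-\log\varepsilon}$. *)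

From HB Require Import structures.
From mathcomp Require Import all_boot all_order all_algebra.
From mathcomp Require Import all_classical all_reals all_analysis.
Set Implicit Arguments. Unset Strict Implicit. Unset Printing Implicit Defensive.
Import Order.TTheory GRing.Theory Num.Theory.
Import numFieldNormedType.Exports.
Local Open Scope classical_set_scope.
Local Open Scope ring_scope.

Section Defs.
Variables (R : realType) (X : Type) (d : X -> X -> R).

Definition is_metric : Prop :=
  [/\ forall x y, 0 <= d x y,
      forall x y, d x y = 0 <-> x = y,
      forall x y, d x y = d y x &
      forall x y z, d x z <= d x y + d y z].

Definition d_open (U : set X) : Prop :=
  forall x, U x -> exists2 r : R, 0 < r & forall y, d x y < r -> U y.

Definition d_compact : Prop :=
  forall (I : Type) (U : I -> set X), (forall i, d_open (U i)) ->
    (forall x, exists i, U i x) ->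
    exists2 F : set I, finite_set F & forall x, exists2 i, F i & U i x.

Definition d_closed (K : set X) : Prop :=
  forall x, (forall e : R, 0 < e -> exists2 y, K y & d x y < e) -> K x.

Definition KX : set (set X) := [set K | K !=set0 /\ d_closed K].

Definition dist_pt (x : X) (K : set X) : R := inf [set d x y | y in K].

Definition hausdorff (K L : set X) : R :=
  Num.max (sup [set dist_pt x L | x in K]) (sup [set dist_pt y K | y in L]).

Definition finite_union_property (A : set (set X)) : Prop :=
  forall B C, A B -> A C -> A (B `|` C).

Definition split (eps : R) (B C : set X) : Prop :=
  eps < inf [set d x y | x in B & y in C].

Definition Bnum (A : set (set X)) (eps : R) : \bar R :=
  ereal_sup [set ((size s)%:R)%:E | s in
    [set s : seq (set X) | (forall K, K \in s -> A K) /\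
       (forall i j, (i < j < size s)%N -> split eps (nth set0 s i) (nth set0 s j))]].

Definition Ncov (A : set (set X)) (eps : R) : \bar R :=
  ereal_inf [set ((size E)%:R)%:E | E in
    [set E : seq (set X) | (forall C, C \in E -> KX C) /\
       (forall K, A K -> exists2 C, C \in E & hausdorff K C < eps)]].

Definition lower_mo (A : set (set X)) : \bar R :=
  limf_einf (fun eps : R => ((ln (ln (fine (Ncov A eps)))) / (- ln eps))%:E) (0^'+).

Definition lower_B_dim (A : set (set X)) : \bar R :=
  limf_einf (fun eps : R => ((ln (fine (Bnum A eps))) / (- ln eps))%:E) (0^'+).

End Defs.

From Pilot Require Import Defs.
From HB Require Import structures.
From mathcomp Require Import all_boot all_order all_algebra.
From mathcomp Require Import all_classical all_reals all_analysis.
From mathcomp Require Import lra zify.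
Import Order.TTheory GRing.Theory Num.Theory.
Import numFieldNormedType.Exports.
Local Open Scope classical_set_scope.
Local Open Scope ring_scope.

(* Fix e > 0 and a shortest family E of closed sets whose Hausdorff e-balls
   cover A, so |E| = N(A, e).  Let B_1, ..., B_n be pairwise 2e-split members
   of A.  For every nonempty S of {1..n} the union U_S of the B_i, i in S,
   lies in A, hence is H-closer than e to some C in E.  If U_S and U_S' are
   both close to the same C, then S is contained in S': a point of B_i,
   i outside S', is within e of C, which is within e of a point of U_S',
   contradicting 2e-splitness.  So S |-> C is injective and
   2^n <= N(A, e) + 1; in logarithms ln B(A, 2e) + c <= ln ln N(A, e) with
   c = ln (ln 2 / 2).  Compactness makes N(A, e) finite (covers by finite
   sets of points of an e/2-net) and d bounded (so H is controlled by
   point-to-set distances).  Finally - ln (2e) / - ln e -> 1, so the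
   inequality at scales (2e, e) passes to the lower limits. *)

Lemma finite_set_enum (T : Type) (F : set T) : finite_set F ->
  exists n (p : 'I_n -> T), forall x, F x -> exists i, p i = x.
Proof.
move=> /finite_setP[n]; rewrite (card_eqr card_II) => /card_esym/card_eqVP[f].
pose g := f \o to_setT.
exists n, (fun i => val (g i)) => x Fx.
exists ((g^-1)%FUN (SigSub (mem_set Fx))).
by rewrite [g _]invK //= inE.
Qed.

Lemma card_set_ord n : #|{set 'I_n}| = (2 ^ n)%N.
Proof. by rewrite -cardsT -powersetT card_powerset cardsT card_ord. Qed.

(* Injection count: if every t other than t0 has a witness in E satisfying
   P t, and no witness serves two such t, then |T| <= |E| + 1 (send t to the
   index of its first witness, and t0 to the extra slot). *)
Lemma card_le_witness {T : finType} {U : eqType} (t0 : T) (E : seq U)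
    (P : T -> U -> bool) :
  (forall t, t != t0 -> has (P t) E) ->
  (forall t t' C, C \in E -> t != t0 -> t' != t0 -> P t C -> P t' C -> t = t') ->
  (#|T| <= (size E).+1)%N.
Proof.
case: E => [|c0 E'] witness witness_uniq.
  suff /subset_leq_card : [set: T]%SET \subset [set t0]%SET by rewrite cardsT cards1.
  by apply/fintype.subsetP => t _; rewrite !inE; apply: contraT => /witness.
move: (c0 :: E') witness witness_uniq => {E'} E witness witness_uniq.
pose f t : 'I_(size E).+1 := if t == t0 then ord_max else inord (find (P t) E).
have f_val t : t != t0 -> val (f t) = find (P t) E /\ (find (P t) E < size E)%N.
  move=> tt0; rewrite /f (negbTE tt0) /= inordK; last by rewrite ltnS find_size.
  by split => //; rewrite -has_find witness.
have f_neq t : t != t0 -> f t != f t0.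
  move=> tt0; have [v l] := f_val _ tt0.
  by rewrite -val_eqE /= v /f eqxx /= neq_ltn l.
suff /leq_card : injective f by rewrite card_ord.
move=> t t'.
have [->|tt0] := eqVneq t t0; have [->|t't0] := eqVneq t' t0 => // ftt'.
- by move: (f_neq _ t't0); rewrite -ftt' eqxx.
- by move: (f_neq _ tt0); rewrite ftt' eqxx.
have [v l] := f_val _ tt0; have [v' _] := f_val _ t't0.
have eqfind : find (P t) E = find (P t') E by rewrite -v -v' ftt'.
apply: (witness_uniq _ _ (nth c0 E (find (P t) E))) => //.
- exact: mem_nth.
- exact: nth_find (witness _ tt0).
- by rewrite eqfind; exact: nth_find (witness _ t't0).
Qed.

Lemma fup_bigcup (X : Type) (A : set (set X)) (I : eqType) (F : I -> set X)
    (l : seq I) :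
  finite_union_property A -> (forall i, i \in l -> A (F i)) -> l != [::] ->
  A (\bigcup_(i in [set` l]) F i).
Proof.
move=> hAU; elim: l => [//|i l IH] AF _.
have Ai : A (F i) by apply: AF; rewrite mem_head.
case: l IH AF => [|j l] IH AF; first by rewrite set_cons1 bigcup_set1.
have -> : [set` i :: j :: l] = i |` [set` j :: l].
  rewrite predeqE => k; rewrite /= in_cons.
  by split => [/orP[/eqP->|kl]|[->|kl]]; [left|right|rewrite eqxx|rewrite kl orbT].
rewrite bigcup_setU1; apply: hAU => //; apply: IH => // k kl.
by apply: AF; rewrite in_cons kl orbT.
Qed.

Section LogBounds.
Variable R : realType.

(* The additive constant c = ln (ln 2 / 2) < 0 in ln B(A, 2e) + c <= ln ln N(A, e). *)
Definition log_const : R := ln (ln 2 / 2).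

Lemma ln2_gt0 : 0 < ln (2 : R).
Proof. by apply: ln_gt0; rewrite ltr1n. Qed.

Lemma log_const_lt0 : log_const < 0.
Proof.
apply: ln_lt0; have l2 := ln2_gt0; have := @ln_sublinear R 2 (ltr0Sn _ 1).
by rewrite divr_gt0 //= ltr_pdivrMr //; lra.
Qed.

(* ln ln m >= c for every positive integer m (with ln 0 = 0 for m = 1). *)
Lemma log_const_le_loglog {m : nat} : (1 <= m)%N -> log_const <= ln (ln (m%:R : R)).
Proof.
move=> m1; have c0 := log_const_lt0; have l2 := ln2_gt0.
case: m m1 => [//|[_|m _]]; first by rewrite ln1 ln0 // ltW.
have ln2_le : ln (2 : R) <= ln (m.+2%:R : R).
  by rewrite ler_ln ?posrE ?ltr0n // ler_nat.
apply: (@le_trans _ _ (ln (ln (2 : R)))).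
  rewrite /log_const ler_ln ?posrE ?divr_gt0 //.
  by rewrite ler_pdivrMr //; lra.
by rewrite ler_ln ?posrE //; apply: lt_le_trans ln2_le.
Qed.

(* 2^n <= m + 1 forces n <= (ln m)/(ln 2 / 2), i.e. n <= exp (ln ln m - c). *)
Lemma count_le_exp {m n : nat} : (1 <= m)%N -> (2 ^ n <= m.+1)%N ->
  (n%:R : R) <= expR (ln (ln (m%:R : R)) - log_const).
Proof.
move=> m1 hn; have c0 := log_const_lt0; have l2 := ln2_gt0.
have LL := log_const_le_loglog m1.
case: n hn => [_|[_|n hn]]; first exact: ltW (expR_gt0 _).
  by rewrite -[X in X <= _]expR0 ler_expR; lra.
have hm : (2 ^ n.+1 <= m)%N.
  have : (0 < 2 ^ n.+1)%N by rewrite expn_gt0.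
  by move: hn; rewrite (expnS 2 n.+1); lia.
have ln_m : ln (2 : R) *+ n.+1 <= ln (m%:R : R).
  have m_pos : (0 : R) < m%:R by rewrite ltr0n.
  by rewrite -lnXn // ler_ln ?posrE ?exprn_gt0 // -natrX ler_nat.
have n_ln : (n.+2%:R : R) * (ln 2 / 2) <= ln (m%:R : R).
  apply: le_trans ln_m; rewrite -[_ *+ _]mulr_natr -[n.+2]addn2 -[n.+1]addn1 !natrD.
  by have := ler0n R n; nra.
have n_pos : (0 : R) < n.+2%:R by rewrite ltr0n.
have ln_n : ln (n.+2%:R : R) + log_const <= ln (ln (m%:R : R)).
  rewrite /log_const -lnM ?posrE ?divr_gt0 // ler_ln ?posrE ?mulr_gt0 ?divr_gt0 //.
  by apply: lt_le_trans n_ln; rewrite mulr_gt0 ?divr_gt0.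
rewrite -[X in X <= _](lnK (_ : (n.+2%:R : R) \in Num.pos)) ?posrE //.
by rewrite ler_expR; lra.
Qed.

End LogBounds.

Section LowerRatio.
Variable R : realType.

Lemma lee_of_real_lt (x y : \bar R) :
  (forall r : R, (r%:E < x)%E -> (r%:E <= y)%E) -> (x <= y)%E.
Proof.
case: x => [x||] h; case: y h => [y||] h //; rewrite ?leey ?leNye //.
- rewrite lee_fin leNgt; apply/negP => yx.
  by have := h ((x + y) / 2); rewrite !lte_fin !lee_fin; lra.
- by suff : ((x - 1)%:E <= -oo)%E by []; apply: h; rewrite lte_fin; lra.
- by move: (h (y + 1) (ltry _)); rewrite lee_fin => ?; exfalso; lra.
- by move: (h 0 (ltry _)).
Qed.

Lemma at_right0_interval_sub {V : set R} :
  (0^'+) V -> exists2 del, 0 < del & forall x, 0 < x < del -> V x.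
Proof.
move=> /nbhs_ballP[del del0 delV]; exists del => // x /andP[x0 xdel].
by apply: delV => //; rewrite /ball /= sub0r normrN gtr0_norm.
Qed.

Lemma at_right0_interval (eta : R) : 0 < eta -> (0^'+) [set x | 0 < x < eta].
Proof.
move=> eta0; apply/nbhs_ballP; exists eta => // x.
rewrite /ball /= sub0r normrN => xeta x0; rewrite /= x0 /=.
by move: xeta; rewrite gtr0_norm.
Qed.

Lemma ratio_shift_bound {c l l' b L eps : R} :
  0 < eps -> 2 * eps < 1 -> l < l' ->
  (l' * ln 2 - c) / (l' - l) <= - ln eps ->
  l' < b / - ln (2 * eps) -> b + c <= L -> l <= L / - ln eps.
Proof.
move=> eps0 eps_half ll' eps_small hb hL.
have l2 := ln2_gt0 R.
have ln2eps : ln (2 * eps) < 0 by apply: ln_lt0; rewrite eps_half mulr_gt0.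
have lneps : ln eps < 0 by apply: ln_lt0; rewrite eps0 /=; lra.
rewrite ler_pdivrMr ?subr_gt0 // in eps_small.
rewrite ltr_pdivlMr ?oppr_gt0 // lnM ?posrE // in hb.
rewrite ler_pdivlMr ?oppr_gt0 //; nra.
Qed.

(* Change of scale in lower log-ratios: if f (2 eps) + c <= g eps for all
   eps > 0, then liminf f(eps)/(-ln eps) <= liminf g(eps)/(-ln eps) as
   eps -> 0+, because - ln (2 eps) / - ln eps -> 1. *)
Lemma liminf_log_ratio_le {f g : R -> R} (c : R) :
  (forall eps, 0 < eps -> f (2 * eps) + c <= g eps) ->
  (limf_einf (fun eps : R => (f eps / - ln eps)%:E) (0^'+) <=
   limf_einf (fun eps : R => (g eps / - ln eps)%:E) (0^'+))%E.
Proof.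
move=> fg; rewrite !limf_einfE; apply: ge_ereal_sup => _ [V FV <-].
apply: lee_of_real_lt => l' l'_lt; apply: lee_of_real_lt => l.
rewrite lte_fin => ll'.
have fV eps : V eps -> l' < f eps / - ln eps.
  move=> Veps; rewrite -lte_fin; apply: lt_le_trans l'_lt _.
  by apply: ereal_inf_lbound; exists eps.
have [del del0 delV] := at_right0_interval_sub FV.
pose eta := Num.min (Num.min (del / 2) (1 / 2))
  (expR (- ((l' * ln 2 - c) / (l' - l)))).
have eta0 : 0 < eta by rewrite !lt_min !divr_gt0 ?expR_gt0.
apply: le_ereal_sup_tmp; eexists.
  by exists [set x | 0 < x < eta]; [exact: at_right0_interval|].
apply: le_ereal_inf_tmp => _ [eps /andP[eps0 eps_eta] <-]; rewrite lee_fin.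
move: eps_eta; rewrite !lt_min => /andP[/andP[eps_del eps_half] eps_exp].
have eps2_del : 0 < 2 * eps < del by rewrite mulr_gt0 //=; lra.
have eps_small : (l' * ln 2 - c) / (l' - l) <= - ln eps.
  rewrite lerNr -[X in _ <= X]expRK ler_ln ?posrE ?expR_gt0 //; exact: ltW.
apply: (ratio_shift_bound eps0 _ ll' eps_small (fV _ (delV _ eps2_del)) (fg _ eps0)).
lra.
Qed.

End LowerRatio.

Section Metric.
Variables (R : realType) (X : Type) (d : X -> X -> R).
Hypothesis hm : is_metric d.

Lemma dist_pt_le {K : set X} {x y : X} : K y -> dist_pt d x K <= d x y.
Proof.
move=> Ky; case: hm => d0 _ _ _; apply: ge_inf; last by exists y.
by exists 0 => _ [z _ <-]; exact: d0.
Qed.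

Lemma dist_pt_lt {K : set X} {x : X} {e : R} : K !=set0 -> dist_pt d x K < e ->
  exists2 y, K y & d x y < e.
Proof.
move=> [y Ky] /inf_lt[]; first by exists (d x y), y.
by move=> _ [z Kz <-] h; exists z.
Qed.

Definition hcover (A : set (set X)) (e : R) (E : seq (set X)) : Prop :=
  (forall C, C \in E -> KX d C) /\
  (forall K, A K -> exists2 C, C \in E & hausdorff d K C < e).

Definition pairwise_split (e : R) (s : seq (set X)) : Prop :=
  forall i j, (i < j < size s)%N -> Defs.split d e (nth set0 s i) (nth set0 s j).

Definition subfamily_union (s : seq (set X)) (S : {set 'I_(size s)}) : set X :=
  \bigcup_(i in [set` S]) nth set0 s i.

Lemma split_far {s : seq (set X)} {e : R} {i j : 'I_(size s)} {x y : X} :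
  pairwise_split e s -> i != j -> nth set0 s i x -> nth set0 s j y -> e < d x y.
Proof.
case: hm => d0 _ dsym _ hsp ij xi yj.
have lb (B C : set X) : has_lbound [set d x y | x in B & y in C].
  by exists 0 => _ [a _ [b _ <-]]; exact: d0.
case: (ltngtP i j) => [lt_ij|lt_ji|/val_inj eq_ij]; last by rewrite eq_ij eqxx in ij.
- apply: lt_le_trans (hsp i j _) _; first by rewrite lt_ij ltn_ord.
  by apply: ge_inf => //; exists x => //; exists y.
- apply: lt_le_trans (hsp j i _) _; first by rewrite lt_ji ltn_ord.
  by rewrite dsym; apply: ge_inf => //; exists y => //; exists x.
Qed.

Lemma hausdorff_lt {K C : set X} (r : R) {e : R} : K !=set0 -> C !=set0 ->
  (forall x, K x -> dist_pt d x C <= r) ->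
  (forall y, C y -> dist_pt d y K <= r) -> r < e -> hausdorff d K C < e.
Proof.
move=> [k Kk] [c Cc] KC CK re; rewrite gt_max; apply/andP; split.
- apply: le_lt_trans re; apply: ge_sup; first by exists (dist_pt d k C), k.
  by move=> _ [z Kz <-]; exact: KC.
- apply: le_lt_trans re; apply: ge_sup; first by exists (dist_pt d c K), c.
  by move=> _ [z Cz <-]; exact: CK.
Qed.

Lemma closed_finite_points (I : eqType) (p : I -> X) (l : seq I) :
  d_closed d [set x | exists2 i, i \in l & x = p i].
Proof.
case: (hm) => d0 deq _ _.
elim: l => [|a l IH] x x_adh; first by have [y [i]] := x_adh 1 ltr01.
have [/eqP dxa0|dxa_neq0] := eqVneq (d x (p a)) 0.
  by exists a; [rewrite mem_head | exact/deq/eqP].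
have dxa_gt0 : 0 < d x (p a) by rewrite lt_def dxa_neq0 d0.
suff [i il ->] : [set x | exists2 i, i \in l & x = p i] x.
  by exists i; rewrite // in_cons il orbT.
apply: IH => e e0.
have min_gt0 : 0 < Num.min e (d x (p a)) by rewrite lt_min e0.
have [y [i il ->]] := x_adh _ min_gt0.
rewrite lt_min => /andP[xie xia]; move: il; rewrite in_cons => /orP[/eqP ia|il].
  by move: xia; rewrite ia ltxx.
by exists (p i); [exists i | ].
Qed.

Section Bounded.
Context {D : R} (hD : forall x y, d x y <= D).

(* When d is bounded the suprema defining H are finite, so H K C < e bounds
   the distance from every point of K to C and from every point of C to K. *)
Lemma hausdorff_dist_l {K C : set X} {x : X} {e : R} :
  C !=set0 -> K x -> hausdorff d K C < e -> dist_pt d x C < e.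
Proof.
move=> [c Cc] Kx; apply: le_lt_trans; rewrite le_max; apply/orP; left.
apply: ub_le_sup; last by exists x.
by exists D => _ [z Kz <-]; exact: le_trans (dist_pt_le Cc) (hD _ _).
Qed.

Lemma hausdorff_dist_r {K C : set X} {y : X} {e : R} :
  K !=set0 -> C y -> hausdorff d K C < e -> dist_pt d y K < e.
Proof.
move=> [k Kk] Cy; apply: le_lt_trans; rewrite le_max; apply/orP; right.
apply: ub_le_sup; last by exists y.
by exists D => _ [z Cz <-]; exact: le_trans (dist_pt_le Kk) (hD _ _).
Qed.

(* Key separation step: if the unions of two subfamilies S, S' of a pairwise
   2e-split family of nonempty sets are both H-closer than e to the same set C,
   then S is contained in S' (a point of a member outside S' would be within
   2e of a member of S').  Hence distinct subfamilies need distinct centres. *)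
Lemma union_near_subset {s : seq (set X)} {e e2 : R}
    {S S' : {set 'I_(size s)}} {C : set X} :
  e + e <= e2 -> (forall i : 'I_(size s), nth set0 s i !=set0) ->
  pairwise_split e2 s ->
  S' != finset.set0 -> C !=set0 ->
  hausdorff d (subfamily_union s S) C < e ->
  hausdorff d (subfamily_union s S') C < e -> (S \subset S')%SET.
Proof.
case: (hm) => _ _ _ dtri he hne hsp /set0Pn[j jS'] C0 hS hS'.
apply/fintype.subsetP => i iS; apply: contraT => iS'.
have [x xi] := hne i.
have Sx : subfamily_union s S x by exists i.
have [c Cc xc] := dist_pt_lt C0 (hausdorff_dist_l C0 Sx hS).
have S'0 : subfamily_union s S' !=set0 by have [y yj] := hne j; exists y, j.
have [y [k kS' yk] cy] := dist_pt_lt S'0 (hausdorff_dist_r S'0 Cc hS').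
have ik : i != k by apply: contraNneq iS' => ->.
have := split_far hsp ik xi yk; have := dtri x c y; lra.
Qed.

Section Counting.
Context {A : set (set X)} (hAK : A `<=` KX d) (hAU : finite_union_property A).

(* Counting bound behind the theorem: a pairwise 2e-split family s in A
   and a Hausdorff e-cover E of A satisfy 2^|s| <= |E| + 1, because every
   nonempty subfamily of s has its union in A, and the map sending it to a
   centre of E close to that union is injective. *)
Lemma split_family_card {s : seq (set X)} {e e2 : R} {E : seq (set X)} :
  e + e <= e2 -> (forall K, K \in s -> A K) -> pairwise_split e2 s ->
  hcover A e E -> (2 ^ size s <= (size E).+1)%N.
Proof.
move=> he hs hsp [hEK hEA].
have hne (i : 'I_(size s)) : nth set0 s i !=set0 := (hAK _ (hs _ (mem_nth _ (ltn_ord i)))).1.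
rewrite -card_set_ord.
apply: (card_le_witness finset.set0 E
  (fun S C => hausdorff d (subfamily_union s S) C < e)).
- move=> S /set0Pn[i iS].
  have AU : A (subfamily_union s S).
    rewrite /subfamily_union (_ : [set` S] = [set` enum S]); last first.
      by rewrite predeqE => k /=; rewrite mem_enum.
    apply: fup_bigcup => // [k _|]; first exact/hs/mem_nth.
    by apply/eqP => S0; rewrite -mem_enum S0 in iS.
  by have [C CE SC] := hEA _ AU; apply/hasP; exists C.
- move=> S S' C /hEK[C0 _] S0 S'0 SC S'C.
  apply/eqP; rewrite finset.eqEsubset.
  by rewrite (union_near_subset he hne hsp S'0 C0 SC S'C)
             (union_near_subset he hne hsp S0 C0 S'C SC).
Qed.

End Counting.

End Bounded.

Lemma Bnum_log_bound (A : set (set X)) e2 (m : nat) : (1 <= m)%N ->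
  (forall s, (forall K, K \in s -> A K) -> pairwise_split e2 s ->
    (2 ^ size s <= m.+1)%N) ->
  ln (fine (Bnum d A e2)) + log_const R <= ln (ln (m%:R : R)).
Proof.
move=> m1 split_card; set M := expR (ln (ln (m%:R : R)) - log_const R).
have BM : (Bnum d A e2 <= M%:E)%E.
  apply: ge_ereal_sup => _ [s [hs hsp] <-]; rewrite lee_fin.
  exact: count_le_exp m1 (split_card s hs hsp).
have B0 : (0 <= Bnum d A e2)%E.
  apply: le_ereal_sup_tmp; exists 0%:E => //; exists [::] => //.
  by split => // i j; rewrite andbC.
have LL := @log_const_le_loglog R m m1.
move: (Bnum d A e2) B0 BM => [r||] //=; rewrite ?lee_fin => r0 rM.
have [->|r_neq0] := eqVneq r 0; first by rewrite ln0 // add0r.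
have : ln r <= ln M by rewrite ler_ln ?posrE ?expR_gt0 // lt_def r_neq0 r0.
rewrite /M expRK; lra.
Qed.

Section Compact.
Hypothesis hc : d_compact d.

Lemma finite_net {r : R} : 0 < r ->
  exists m (p : 'I_m -> X), forall x, exists i, d x (p i) < r.
Proof.
case: (hm) => _ deq dsym dtri r0.
have [] := hc X (fun c => [set y | d c y < r]).
- move=> c y /= cy; exists (r - d c y); first by rewrite subr_gt0.
  by move=> z yz; apply: le_lt_trans (dtri c y z) _; rewrite -ltrBrDl.
- by move=> x; exists x => /=; rewrite (proj2 (deq x x) erefl).
move=> F /finite_set_enum [m [p hp]] hF; exists m, p => x.
have [c Fc cx] := hF x; have [i pic] := hp c Fc.
by exists i; rewrite pic dsym.
Qed.

(* A compact metric space is bounded: all distances are dominated by the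
   diameter of a finite 1-net plus 2. *)
Lemma metric_bounded : exists D, forall x y, d x y <= D.
Proof.
case: (hm) => d0 _ dsym dtri.
have [m [p hp]] := finite_net ltr01.
pose S := \sum_(i < m) \sum_(j < m) d (p i) (p j).
have net_le i j : d (p i) (p j) <= S.
  rewrite /S (bigD1 i) //= (bigD1 j) //= -addrA lerDl.
  by apply: addr_ge0; apply: sumr_ge0 => k _; [|apply: sumr_ge0 => l _]; exact: d0.
exists (S + 2) => x y.
have [i xi] := hp x; have [j yj] := hp y.
have := dtri x (p i) y; have := dtri (p i) (p j) y; have := net_le i j.
rewrite (dsym (p j) y); lra.
Qed.

(* In a compact space every subfamily of K(X) has finite Hausdorff e-covers:
   take the nonempty sets of points of a finite e/2-net. *)
Lemma finite_hausdorff_cover {A : set (set X)} {e : R} :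
  A `<=` KX d -> 0 < e -> exists E, hcover A e E.
Proof.
case: (hm) => _ _ dsym _ hAK e0.
have [m [p hp]] := finite_net (divr_gt0 e0 (ltr0Sn _ 1)).
pose pts (T : {set 'I_m}) := [set x | exists2 i, i \in T & x = p i].
have pts_closed T : d_closed d (pts T).
  rewrite (_ : pts T = [set x | exists2 i, i \in enum T & x = p i]).
    exact: closed_finite_points.
  by apply/seteqP; split => x [i iT ->]; exists i; rewrite ?mem_enum in iT *.
exists [seq pts T | T <- enum [set T : {set 'I_m} | T != finset.set0]%SET].
split=> [C /mapP[T]|K /hAK[[k Kk] _]].
  rewrite mem_enum inE => /set0Pn[i iT] ->.
  by split; [exists (p i), i | exact: pts_closed].
pose T := [set i : 'I_m | dist_pt d (p i) K < e / 2]%SET.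
have inT x i : K x -> d x (p i) < e / 2 -> i \in T.
  by move=> Kx h; rewrite inE; apply: le_lt_trans (dist_pt_le Kx) _; rewrite dsym.
have [i0 ki0] := hp k.
exists (pts T).
  apply/mapP; exists T => //; rewrite mem_enum inE; apply/set0Pn; exists i0.
  exact: inT ki0.
apply: (hausdorff_lt (e / 2)) => [|||_ [i iT ->]|]; first by exists k.
- by exists (p i0), i0 => //; exact: inT ki0.
- move=> x Kx; have [i xi] := hp x.
  apply: le_trans (dist_pt_le (_ : pts T (p i))) _; last exact: ltW.
  by exists i => //; exact: inT xi.
- by move: iT; rewrite inE => /ltW.
- lra.
Qed.

Lemma Ncov_attained {A : set (set X)} {e : R} : A `<=` KX d -> 0 < e ->
  exists E, hcover A e E /\ Ncov d A e = ((size E)%:R)%:E.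
Proof.
move=> hAK e0; have [E0 hE0] := finite_hausdorff_cover hAK e0.
pose sizes := [set n | exists E, hcover A e E /\ size E = n].
have [m [[E [hE <-]] m_min]] : exists m, sizes m /\ forall k, sizes k -> (m <= k)%N.
  by apply: nat_has_minimum; exists (size E0), E0.
exists E; split => //; apply/eqP; rewrite eq_le; apply/andP; split.
  by apply: ereal_inf_lbound; exists E.
apply: le_ereal_inf_tmp => _ [E' hE' <-]; rewrite lee_fin ler_nat.
by apply: m_min; exists E'.
Qed.

Lemma log_split_le_loglog_cover (A : set (set X)) e :
  A `<=` KX d -> A !=set0 -> finite_union_property A -> 0 < e ->
  ln (fine (Bnum d A (2 * e))) + log_const R <= ln (ln (fine (Ncov d A e))).
Proof.
move=> hAK [K AK] hAU e0; have [D hD] := metric_bounded.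
have [E [hE ->]] := Ncov_attained hAK e0.
have E1 : (1 <= size E)%N by have [C CE _] := hE.2 _ AK; case: E {hE} CE.
apply: Bnum_log_bound E1 _ => s hs hsp.
by apply: (split_family_card hD hAK hAU _ hs hsp hE); lra.
Qed.

End Compact.
End Metric.

Local Open Scope ereal_scope.

Theorem lemma4p6 (R : realType) (X : Type) (d : X -> X -> R)
  (hmetric : is_metric d) (hcompact : d_compact d)
  (A : set (set X)) (hAK : A `<=` KX d) (hA0 : A !=set0)
  (hAU : finite_union_property A) :
  lower_B_dim d A <= lower_mo d A.
Proof.
apply: (@liminf_log_ratio_le R (fun eps => ln (fine (Bnum d A eps)))
  (fun eps => ln (ln (fine (Ncov d A eps)))) (log_const R)) => eps eps0.
exact: log_split_le_loglog_cover.
Qed.
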